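(* Let $\gamma<1$, $\gamma\neq 0$. The following two conditions are equivalent. (A) For all $\gamma'\in(\gamma,1)$, $$\lim_{x\uparrow\infty}\frac{u_0'(x)}{x^{\gamma'-1}}=0,$$ and for all $\gamma''<\gamma$, $$\lim_{x\uparrow\infty}\frac{u_0'(x)}{x^{\gamma''-1}}=\infty.$$ (B) $u_0'$ varies regularly at infinity with exponent $\gamma-1$, i.e. for all $k>0$, $$\lim_{x\uparrow\infty}\frac{u_0'(kx)}{u_0'(x)}=k^{\gamma-1}.$$
   Context: Let $\mu$ be a nonzero finite positive Borel measure on $(0,\infty)$ such that $\int y e^{yz}\mu(dy)<\infty$ for every $z\in\mathbb{R}$. Define $h(z,t):=\int e^{yz-\frac12 y^2 t}\mu(dy)$ for $(z,t)\in\mathbb{R}\times[0,\infty)$. Let $u:(0,\infty)\times[0,\infty)\to\mathbb{R}$ be smooth, strictly increasing and strictly concave in $x$, solving $u_t=\frac12 u_x^2/u_{xx}$, and related to $h$ by $u_x(h(z,t),t)=e^{-z+t/2}$ for all $(z,t)$. Write $u_0(x):=u(x,0)$; its derivative $u_0'$ is positive. *)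

From HB Require Import structures.
From mathcomp Require Import all_boot all_order all_algebra.
From mathcomp Require Import all_classical all_reals all_analysis.
Set Implicit Arguments. Unset Strict Implicit. Unset Printing Implicit Defensive.
Import Order.TTheory GRing.Theory Num.Theory.
Import numFieldNormedType.Exports.
Local Open Scope classical_set_scope.
Local Open Scope ring_scope.

Definition hfun {R : realType} (mu : {measure set R -> \bar R}) (z t : R) : R :=
  fine (\int[mu]_(y in `]0%R, +oo[) (expR (y * z - y ^+ 2 * t / 2))%:E)%E.

Definition ux {R : realType} (u : R -> R -> R) (x t : R) : R :=
  derive1 (fun x' => u x' t) x.
Definition uxx {R : realType} (u : R -> R -> R) (x t : R) : R :=
  derive1 (fun x' => ux u x' t) x.
Definition ut {R : realType} (u : R -> R -> R) (x t : R) : R :=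
  derive1 (fun t' => u x t') t.

Definition u0' {R : realType} (u : R -> R -> R) (x : R) : R := ux u x 0.

Definition strictly_increasing_on_pos {R : realType} (f : R -> R) : Prop :=
  forall x y : R, 0 < x -> x < y -> f x < f y.

Definition strictly_concave_on_pos {R : realType} (f : R -> R) : Prop :=
  forall (x y l : R), 0 < x -> 0 < y -> x != y -> 0 < l -> l < 1 ->
    l * f x + (1 - l) * f y < f (l * x + (1 - l) * y).

(* Write u0'(e^s) = e^(-g(s)).  Since u0'(h(z,0)) = e^(-z) and u0' is injective
   (u(.,0) is strictly concave), g is the inverse of z |-> ln h(z,0), which is
   increasing and, by Hoelder's inequality, convex; hence g is concave.  In the
   variable s, (A) says that b s - g(s) tends to -oo for 0 < b < 1 - gamma and to
   +oo for b > 1 - gamma, while (B) says that g(s + c) - g(s) tends to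
   (1 - gamma) c for every c.  For a concave g both express that g has asymptotic
   slope 1 - gamma, because the increments g(s + c) - g(s) are nonincreasing in s. *)

From HB Require Import structures.
From mathcomp Require Import all_boot all_order all_algebra.
From mathcomp Require Import all_classical all_reals all_analysis.
From mathcomp Require Import ring lra measurable_realfun.
Import Order.TTheory GRing.Theory Num.Theory.
Import numFieldNormedType.Exports.
Local Open Scope classical_set_scope.
Local Open Scope ring_scope.

Definition concave_fun {R : realFieldType} (g : R -> R) :=
  forall s t u, s < t -> t < u -> (u - t) * g s + (t - s) * g u <= (u - s) * g t.

Lemma affine_cvgy {R : realFieldType} (m q : R) : 0 < m ->
  (m * s + q) @[s --> +oo] --> +oo.
Proof.
move=> m0; apply/cvgryPge => A; near=> s.
have : (A - q) / m <= s by near: s; apply: nbhs_pinfty_ge; exact: num_real.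
by rewrite ler_pdivrMr // mulrC; lra.
Unshelve. all: by end_near.
Qed.

Section concave_asymptotic_slope.
Context {R : realFieldType} (g : R -> R).
Hypothesis g_concave : concave_fun g.

Lemma concave_increment_le c s1 s2 : 0 < c -> s1 <= s2 ->
  g (s2 + c) - g s2 <= g (s1 + c) - g s1.
Proof.
move=> c0; rewrite le_eqVlt => /orP[/eqP->//|lt12].
have h1 := g_concave s1 (s1 + c) (s2 + c) ltac:(lra) ltac:(lra).
have h2 := g_concave s1 s2 (s2 + c) lt12 ltac:(lra).
have L0 : 0 < s2 + c - s1 by lra.
by rewrite -(ler_pM2l L0); lra.
Qed.

Lemma concave_secant_le s0 c s : 0 < c -> s0 + c < s ->
  c * (g s - g s0) <= (s - s0) * (g (s0 + c) - g s0).
Proof. by move=> c0 cs; have := g_concave s0 (s0 + c) s; lra. Qed.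

Lemma concave_secant_ge s0 c s : 0 < c -> s0 + c < s ->
  (s - s0) * (g s - g (s - c)) <= c * (g s - g s0).
Proof. by move=> c0 cs; have := g_concave s0 (s - c) s; lra. Qed.

Lemma increment_ge_lim (c a : R) : 0 < c ->
  (g (s + c) - g s) @[s --> +oo] --> a -> forall s0, a <= g (s0 + c) - g s0.
Proof.
move=> c0 Da s0; apply: (ler_cvg_to Da (cvg_cst _)).
near=> s; apply: (concave_increment_le c s0 s c0).
by near: s; apply: nbhs_pinfty_ge; exact: num_real.
Unshelve. all: by end_near.
Qed.

Lemma concave_ge_affine (a : R) : (g (s + 1) - g s) @[s --> +oo] --> a ->
  forall s, 1 < s -> g 0 + a * s <= g s.
Proof.
move=> Da s s1; have := concave_secant_ge 0 1 s ltr01 ltac:(lra).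
have := increment_ge_lim 1 a ltr01 Da (s - 1); rewrite subrK subr0 mul1r.
have s0 : 0 < s by lra.
by rewrite -(ler_pM2l s0); lra.
Qed.

Lemma concave_le_affine (a b : R) : (g (s + 1) - g s) @[s --> +oo] --> a -> a < b ->
  exists s0, forall s, s0 + 1 < s -> g s <= g s0 + b * (s - s0).
Proof.
move=> Da ab; have [s0 Ds0] := filter_ex (cvgr_lt a Da b ab).
exists s0 => s s1; have := concave_secant_le s0 1 s ltr01 s1; rewrite mul1r.
have : (s - s0) * (g (s0 + 1) - g s0) <= (s - s0) * b by rewrite ler_pM2l; lra.
lra.
Qed.

Lemma concave_lin_sub_cvgNy (a b : R) : (g (s + 1) - g s) @[s --> +oo] --> a ->
  b < a -> (b * s - g s) @[s --> +oo] --> -oo.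
Proof.
move=> Da ba; apply: (@ler_cvgNy _ _ _ _ (fun s => - ((a - b) * s + g 0))).
  near=> s; have s1 : 1 < s by near: s; apply: nbhs_pinfty_gt; exact: num_real.
  by have := concave_ge_affine a Da s s1; lra.
by apply/cvgNrNy/affine_cvgy; rewrite subr_gt0.
Unshelve. all: by end_near.
Qed.

Lemma concave_lin_sub_cvgy (a b : R) : (g (s + 1) - g s) @[s --> +oo] --> a ->
  a < b -> (b * s - g s) @[s --> +oo] --> +oo.
Proof.
move=> Da ab; set m := (a + b) / 2.
have [s0 g_le] := concave_le_affine a m Da ltac:(rewrite /m; lra).
apply: (@ger_cvgy _ _ _ _ (fun s => (b - m) * s + (m * s0 - g s0))).
  near=> s; have s_gt : s0 + 1 < s by near: s; apply: nbhs_pinfty_gt; exact: num_real.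
  by have := g_le s s_gt; lra.
by apply: affine_cvgy; rewrite /m; lra.
Unshelve. all: by end_near.
Qed.

Lemma increment_ge_of_cvgNy (a : R) : 0 < a ->
  (forall b, 0 < b -> b < a -> (b * s - g s) @[s --> +oo] --> -oo) ->
  forall c s0, 0 < c -> a * c <= g (s0 + c) - g s0.
Proof.
move=> a0 Ha c s0 c0; rewrite leNgt; apply/negP => Dlt.
set d := (g (s0 + c) - g s0) / c.
have dc : d * c = g (s0 + c) - g s0 by rewrite /d divfK // gt_eqF.
have da : d < a by rewrite /d ltr_pdivrMr // mulrC.
set b := (Num.max d 0 + a) / 2.
have [b0 ba db] : [/\ 0 < b, b < a & d < b].
  have : d <= Num.max d 0 by rewrite le_max lexx.
  have : 0 <= Num.max d 0 by rewrite le_max lexx orbT.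
  have : Num.max d 0 < a by rewrite gt_max da.
  by rewrite /b; split; lra.
have /cvgrNyPle/(_ (d * s0 - g s0 - 1)) H := Ha b b0 ba.
have Hlow : \forall s \near +oo, d * s0 - g s0 <= b * s - g s.
  near=> s; have s_gt : s0 + c < s by near: s; apply: nbhs_pinfty_gt; exact: num_real.
  have : c * (g s - g s0) <= c * ((s - s0) * d).
    by have := concave_secant_le s0 c s c0 s_gt; rewrite -dc; lra.
  have s_ge0 : 0 <= s by near: s; apply: nbhs_pinfty_ge; exact: num_real.
  rewrite ler_pM2l // => g_le.
  have : 0 <= (b - d) * s by apply: mulr_ge0; lra.
  lra.
have [s [/= H1 H2]] := filter_ex (filterI H Hlow); lra.
Unshelve. all: by end_near.
Qed.

Lemma increment_le_of_cvgy (a c e : R) : 0 < c -> 0 < e ->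
  (forall b, a < b -> (b * s - g s) @[s --> +oo] --> +oo) ->
  \forall s \near +oo, g (s + c) - g s <= a * c + e.
Proof.
move=> c0 e0 Ha; set b := a + e / c.
have cb : c * b = a * c + e by rewrite /b mulrDr mulrC mulrCA divff ?gt_eqF // mulr1.
have ab : a < b by rewrite /b ltrDl divr_gt0.
have /cvgryPge/(_ (- g 0)) Hb := Ha b ab.
have [s [/= Hs cs]] := filter_ex (filterI Hb (nbhs_pinfty_gt (num_real c))).
near=> t; have st : s - c <= t by near: t; apply: nbhs_pinfty_ge; exact: num_real.
apply: le_trans (concave_increment_le c (s - c) t c0 st) _.
have := concave_secant_ge 0 c s c0 ltac:(lra); rewrite subrK subr0 => D_le.
have gs_le : c * (g s - g 0) <= (a * c + e) * s by rewrite -cb -mulrA ler_pM2l //; lra.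
have s0 : 0 < s by lra.
by rewrite -(ler_pM2l s0); lra.
Unshelve. all: by end_near.
Qed.

Lemma concave_increment_cvg (a : R) : 0 < a ->
  (forall b, 0 < b -> b < a -> (b * s - g s) @[s --> +oo] --> -oo) ->
  (forall b, a < b -> (b * s - g s) @[s --> +oo] --> +oo) ->
  forall c, (g (s + c) - g s) @[s --> +oo] --> a * c.
Proof.
move=> a0 Hlo Hhi.
have cvg_pos c : 0 < c -> (g (s + c) - g s) @[s --> +oo] --> a * c.
  move=> c0; apply/cvgrPdist_le => e e0; near=> s.
  have D_ge := increment_ge_of_cvgNy a a0 Hlo c s c0.
  have D_le : g (s + c) - g s <= a * c + e.
    by near: s; exact: increment_le_of_cvgy.
  by rewrite ler_norml; apply/andP; split; lra.
move=> c; have [c0|c0|<-] := ltgtP 0 c; first exact: cvg_pos.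
  have := cvg_pos (- c) ltac:(by rewrite oppr_gt0); rewrite -(cvg_shiftr c) => /cvgN.
  rewrite mulrN opprK; apply: cvg_trans; apply: near_eq_cvg; near=> s.
  by rewrite fctE addrK opprB.
by rewrite mulr0; under eq_fun do rewrite addr0 subrr; exact: cvg_cst.
Unshelve. all: by end_near.
Qed.

Lemma concave_asymptotic_slopeP (a : R) : 0 < a ->
  ((forall b, 0 < b -> b < a -> (b * s - g s) @[s --> +oo] --> -oo) /\
   (forall b, a < b -> (b * s - g s) @[s --> +oo] --> +oo)) <->
  (forall c, (g (s + c) - g s) @[s --> +oo] --> a * c).
Proof.
move=> a0; split=> [[Hlo Hhi]|D]; first exact: concave_increment_cvg.
have D1 := D 1; rewrite mulr1 in D1.
split=> b *; first exact: (concave_lin_sub_cvgNy a b D1).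
exact: (concave_lin_sub_cvgy a b D1).
Qed.

End concave_asymptotic_slope.

Lemma concave_fun_inverse {R : realFieldType} (phi g : R -> R) :
  (forall z1 z2, z1 < z2 -> phi z1 < phi z2) ->
  (forall a b l, 0 < l -> l < 1 ->
    phi (l * a + (1 - l) * b) <= l * phi a + (1 - l) * phi b) ->
  cancel g phi -> concave_fun g.
Proof.
move=> phi_incr phi_conv gK s t w st tw.
have ws0 : 0 < w - s by rewrite subr_gt0 (lt_trans st tw).
set l := (w - t) / (w - s).
have l0 : 0 < l by rewrite /l divr_gt0 // subr_gt0.
have l1 : l < 1 by rewrite /l ltr_pdivrMr //; lra.
have := phi_conv (g s) (g w) l l0 l1.
have -> : l * phi (g s) + (1 - l) * phi (g w) = phi (g t).
  by rewrite !gK /l; field; rewrite gt_eqF.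
move=> conv; have : l * g s + (1 - l) * g w <= g t.
  by rewrite leNgt; apply/negP => /phi_incr; rewrite ltNge conv.
have -> : (w - t) * g s + (t - s) * g w = (w - s) * (l * g s + (1 - l) * g w).
  by rewrite /l; field; rewrite gt_eqF.
by rewrite ler_pM2l.
Qed.

Section expR_change_of_variable.
Context {R : realType}.

Lemma expR_cvgy : (@expR R) s @[s --> +oo] --> +oo.
Proof.
apply: (@ger_cvgy _ _ _ _ (fun s => 1 * s + 1)); last exact: affine_cvgy.
by apply: nearW => s; rewrite mul1r addrC expR_ge1Dx.
Qed.

Lemma ln_cvgy : (@ln R) x @[x --> +oo] --> +oo.
Proof.
apply/cvgryPge => A; near=> x.
have Ax : expR A <= x by near: x; apply: nbhs_pinfty_ge; exact: num_real.
by rewrite -ler_expR lnK // posrE (lt_le_trans (expR_gt0 A)).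
Unshelve. all: by end_near.
Qed.

Lemma cvgy_comp_expRP (f : R -> R) (L : set_system R) :
  f x @[x --> +oo] --> L <-> f (expR s) @[s --> +oo] --> L.
Proof.
split=> [fL|/(cvg_comp _ _ ln_cvgy)]; first exact: cvg_comp expR_cvgy fL.
apply: cvg_trans; apply: near_eq_cvg; near=> x => /=.
by rewrite lnK // posrE; near: x; apply: nbhs_pinfty_gt; exact: num_real.
Unshelve. all: by end_near.
Qed.

Context {T : Type} {F : set_system T} {FF : Filter F}.

Lemma expR_cvg0P (f : T -> R) :
  expR (f t) @[t --> F] --> 0 <-> f t @[t --> F] --> -oo.
Proof.
split=> fF.
- apply/cvgrNyPle => A; near=> t.
  rewrite -ler_expR ltW //; near: t.
  exact: (cvgr_lt 0 fF _ (expR_gt0 A)).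
- apply/cvgrPdist_lt => e e0; near=> t.
  rewrite sub0r normrN gtr0_norm ?expR_gt0 // -[e]lnK ?posrE // ltr_expR.
  by near: t; apply: cvgrNy_lt.
Unshelve. all: by end_near.
Qed.

Lemma expR_cvgyP (f : T -> R) :
  expR (f t) @[t --> F] --> +oo <-> f t @[t --> F] --> +oo.
Proof.
split=> fF; apply/cvgryPge => A.
- by near=> t; rewrite -ler_expR; near: t; apply: cvgry_ge.
- near=> t; apply: le_trans (expR_ge1Dx _); rewrite -lerBlDl.
  by near: t; apply: cvgry_ge.
Unshelve. all: by end_near.
Qed.

Lemma expR_cvgP (f : T -> R) (m : R) :
  expR (f t) @[t --> F] --> expR m <-> f t @[t --> F] --> m.
Proof.
split=> fF; last exact: cvg_comp fF (@continuous_expR R m).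
have := cvg_comp _ _ fF (continuous_ln (expR_gt0 m)).
rewrite -[X in _ --> X]expRK => H; apply: cvg_trans H; apply: near_eq_cvg.
by apply: nearW => t /=; rewrite expRK.
Qed.

End expR_change_of_variable.

Section regular_variation.
Context {R : realType} (f g : R -> R).
Hypothesis f_expR : forall s, f (expR s) = expR (- g s).

Lemma power_cvgP (p : R) (L : set_system R) :
  (f x / x `^ (p - 1)) @[x --> +oo] --> L <->
  expR ((1 - p) * s - g s) @[s --> +oo] --> L.
Proof.
have E s : f (expR s) / expR s `^ (p - 1) = expR ((1 - p) * s - g s).
  by rewrite f_expR -expRM -expRN -expRD; congr expR; ring.
by rewrite cvgy_comp_expRP; under eq_fun do rewrite E.
Qed.

Lemma ratio_cvgP (c : R) (L : set_system R) :
  (f (expR c * x) / f x) @[x --> +oo] --> L <->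
  expR (- (g (s + c) - g s)) @[s --> +oo] --> L.
Proof.
have E s : f (expR c * expR s) / f (expR s) = expR (- (g (s + c) - g s)).
  by rewrite -expRD addrC !f_expR -expRN -expRD opprK opprB (addrC (- _)).
by rewrite cvgy_comp_expRP; under eq_fun do rewrite E.
Qed.

Hypothesis g_concave : concave_fun g.

Lemma regular_variationP (gamma : R) : gamma < 1 ->
  ((forall p, gamma < p -> p < 1 -> (f x / x `^ (p - 1)) @[x --> +oo] --> 0) /\
   (forall p, p < gamma -> (f x / x `^ (p - 1)) @[x --> +oo] --> +oo)) <->
  (forall k, 0 < k -> (f (k * x) / f x) @[x --> +oo] --> k `^ (gamma - 1)).
Proof.
move=> gamma_lt1; have a_gt0 : 0 < 1 - gamma by rewrite subr_gt0.
have powerK c : expR c `^ (gamma - 1) = expR (- ((1 - gamma) * c)).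
  by rewrite -expRM; congr expR; ring.
apply: (iff_trans _ (iff_trans (concave_asymptotic_slopeP g g_concave _ a_gt0) _)).
- split=> -[lo hi]; split.
  + move=> b b0 ba; apply/expR_cvg0P.
    by have /power_cvgP := lo (1 - b) ltac:(lra) ltac:(lra); rewrite subKr.
  + move=> b ab; apply/expR_cvgyP.
    by have /power_cvgP := hi (1 - b) ltac:(lra); rewrite subKr.
  + by move=> p p_gt p_lt; apply/power_cvgP/expR_cvg0P/lo; lra.
  + by move=> p p_lt; apply/power_cvgP/expR_cvgyP/hi; lra.
- split=> [D k k0|B c].
  + rewrite -[k]lnK ?posrE // ratio_cvgP powerK.
    by apply/expR_cvgP; exact: cvgN (D _).
  + have := B (expR c) (expR_gt0 c).
    by rewrite ratio_cvgP powerK => /expR_cvgP/cvgNP.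
Qed.

End regular_variation.

Definition slope {R : realFieldType} (U : R -> R) (s t : R) := (U t - U s) / (t - s).

Lemma slopeC {R : realFieldType} (U : R -> R) s t : slope U s t = slope U t s.
Proof. by rewrite /slope -(opprB (U s)) -(opprB s) invrN mulrNN. Qed.

Lemma derive1_slope_cvg {R : realType} (U : R -> R) x : derivable U x 1 ->
  slope U x (x + h) @[h --> 0^'] --> derive1 U x.
Proof.
have E : (fun h : R => h^-1 *: (U (h + x) - U x)) = (fun h => slope U x (x + h)).
  by apply/funext => h; rewrite /slope [x + h]addrC addrK mulrC.
rewrite /derivable /derive1 E.
suff -> : (fun h : R => h^-1 *: ((U \o shift x) (h *: 1) - U x)) =
    (fun h => slope U x (x + h)) by [].
by rewrite -E; apply/funext => h /=; rewrite [h%:A]mulr1.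
Qed.

Section strictly_concave_derivative.
Context {R : realType} (U : R -> R).
Hypothesis U_concave : strictly_concave_on_pos U.

Lemma strictly_concave_chord s t w : 0 < s -> s < t -> t < w ->
  (w - t) * U s + (t - s) * U w < (w - s) * U t.
Proof.
move=> s0 st tw; have sw := lt_trans st tw.
have ws0 : 0 < w - s by rewrite subr_gt0.
set l := (w - t) / (w - s).
have l0 : 0 < l by rewrite /l divr_gt0 // subr_gt0.
have l1 : l < 1 by rewrite /l ltr_pdivrMr //; lra.
have := U_concave s w l s0 (lt_trans s0 sw) (negbT (lt_eqF sw)) l0 l1.
have -> : l * s + (1 - l) * w = t by rewrite /l; field; rewrite gt_eqF.
by rewrite -(ltr_pM2l ws0); congr (_ < _); rewrite /l; field; rewrite gt_eqF.
Qed.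

Lemma strictly_concave_slope s t w : 0 < s -> s < t -> t < w ->
  slope U t w < slope U s w < slope U s t.
Proof.
move=> s0 st tw; have sw := lt_trans st tw.
have chord := strictly_concave_chord s t w s0 st tw.
by apply/andP; split;
  rewrite /slope ltr_pdivrMr ?subr_gt0 // mulrAC ltr_pdivlMr ?subr_gt0 //; lra.
Qed.

Lemma slope_le_derive1 x y : 0 < x -> x < y -> derivable U x 1 ->
  slope U x y <= derive1 U x.
Proof.
move=> x0 xy dU; apply: (ler_cvg_to (cvg_cst _) (derive1_slope_cvg U x dU)).
have m0 : 0 < Num.min x (y - x) by rewrite lt_min x0 subr_gt0.
near=> h; have h0 : h != 0 by near: h; exact: nbhs_dnbhs_neq.
have : `|h| < Num.min x (y - x) by near: h; exact: dnbhs0_lt.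
rewrite lt_min => /andP[hx hyx]; have [h_gt0|h_le0] := ltP 0 h.
  rewrite gtr0_norm // in hyx.
  have /andP[_ lt2] := strictly_concave_slope x (x + h) y x0 ltac:(lra) ltac:(lra).
  exact: ltW.
have h_lt0 : h < 0 by rewrite lt_neqAle h0.
rewrite ltr0_norm // in hx; rewrite [slope U x (x + h)]slopeC.
have /andP[lt1 lt2] := strictly_concave_slope (x + h) x y ltac:(lra) ltac:(lra) xy.
exact: ltW (lt_trans lt1 lt2).
Unshelve. all: by end_near.
Qed.

Lemma derive1_le_slope x y : 0 < y -> y < x -> derivable U x 1 ->
  derive1 U x <= slope U y x.
Proof.
move=> y0 yx dU; apply: (ler_cvg_to (derive1_slope_cvg U x dU) (cvg_cst _)).
have m0 : 0 < x - y by rewrite subr_gt0.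
near=> h; have h0 : h != 0 by near: h; exact: nbhs_dnbhs_neq.
have : `|h| < x - y by near: h; exact: dnbhs0_lt.
have [h_gt0 _|h_le0] := ltP 0 h.
  have /andP[lt1 lt2] := strictly_concave_slope y x (x + h) y0 yx ltac:(lra).
  exact: ltW (lt_trans lt1 lt2).
have h_lt0 : h < 0 by rewrite lt_neqAle h0.
rewrite ltr0_norm // slopeC => hb.
have /andP[lt1 _] := strictly_concave_slope y (x + h) x y0 ltac:(lra) ltac:(lra).
exact: ltW.
Unshelve. all: by end_near.
Qed.

Lemma derive1_strictly_decr x1 x2 : 0 < x1 -> x1 < x2 ->
  derivable U x1 1 -> derivable U x2 1 -> derive1 U x2 < derive1 U x1.
Proof.
move=> x1_gt0 x12 dU1 dU2; set m := (x1 + x2) / 2.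
have x1m : x1 < m by rewrite /m; lra.
have mx2 : m < x2 by rewrite /m; lra.
have /andP[lt1 lt2] := strictly_concave_slope x1 m x2 x1_gt0 x1m mx2.
have := slope_le_derive1 x1 m x1_gt0 x1m dU1.
have := derive1_le_slope x2 m (lt_trans x1_gt0 x1m) mx2 dU2.
lra.
Qed.

End strictly_concave_derivative.

(* Weighted AM-GM, normalised so that integrating it against mu yields
   Hoelder's inequality for h(.,0). *)
Lemma expR_convex_normalized {R : realType} (l u v A B : R) :
  0 <= l -> l <= 1 -> 0 < A -> 0 < B ->
  expR (l * u + (1 - l) * v) <=
    expR (l * ln A + (1 - l) * ln B) * l / A * expR u +
    expR (l * ln A + (1 - l) * ln B) * (1 - l) / B * expR v.
Proof.
move=> l0 l1 A0 B0.
have -> : l * u + (1 - l) * v =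
    (l * (u - ln A) + (1 - l) * (v - ln B)) + (l * ln A + (1 - l) * ln B) by ring.
rewrite expRD; move: (expR _) (expR_gt0 (l * ln A + (1 - l) * ln B)) => C C0.
have := convex_expR (Itv01 l0 l1) (u - ln A) (v - ln B).
rewrite !convRE /= !expRD !expRN !lnK // => conv.
have -> : C * l / A * expR u + C * (1 - l) / B * expR v =
    (l * (expR u * (A^-1)) + (1 - l) * (expR v * (B^-1))) * C.
  by field; rewrite !gt_eqF.
by rewrite ler_pM2r.
Qed.

Section laplace_transform.
Context {R : realType} (mu : {finite_measure set R -> \bar R}).

Lemma measurable_expR_mul (z : R) :
  measurable_fun (`]0%R, +oo[ : set R) (fun y : R => (expR (y * z))%:E).
Proof.
by apply/measurable_EFinP; apply: measurableT_comp => //; exact: mulrr_measurable.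
Qed.

Lemma hfun0_fine z :
  hfun mu z 0 = fine (\int[mu]_(y in `]0%R, +oo[) (expR (y * z))%:E)%E.
Proof. by congr fine; apply: eq_integral => y _; rewrite mulr0 mul0r subr0. Qed.

Lemma hfun0_ge0 z : 0 <= hfun mu z 0.
Proof.
rewrite hfun0_fine; apply/fine_ge0/integral_ge0 => y _.
by rewrite lee_fin expR_ge0.
Qed.

Hypothesis mu_int : forall z : R,
  mu.-integrable `]0%R, +oo[ (fun y => (y * expR (y * z))%:E).

Lemma integrable_expR_mul z :
  mu.-integrable `]0%R, +oo[ (fun y => (expR (y * z))%:E).
Proof.
have := integrableD (measurable_itv _)
  (finite_measure_integrable_cst mu (expR `|z|) (measurable_itv _)) (mu_int z).
apply: le_integrable => //; first exact: measurable_expR_mul.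
move=> y /=; rewrite in_itv /= andbT => y0.
rewrite lee_fin ger0_norm ?expR_ge0 // ger0_norm; last first.
  by rewrite addr_ge0 ?expR_ge0 // mulr_ge0 ?expR_ge0 // ltW.
have [y1|y1] := leP 1 y.
  have : expR (y * z) <= y * expR (y * z) by rewrite ler_peMl ?expR_ge0.
  by have := expR_ge0 `|z|; lra.
have : expR (y * z) <= expR `|z|.
  rewrite ler_expR (le_trans (ler_wpM2l (ltW y0) (ler_norm z))) //.
  by rewrite ler_piMl //; lra.
have : 0 <= y * expR (y * z) by rewrite mulr_ge0 ?expR_ge0 // ltW.
lra.
Qed.

Lemma hfun0E z :
  (hfun mu z 0)%:E = (\int[mu]_(y in `]0%R, +oo[) (expR (y * z))%:E)%E.
Proof.
rewrite hfun0_fine fineK //; apply: integrable_fin_num => //.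
exact: integrable_expR_mul.
Qed.

Lemma hfun0_le z1 z2 : z1 <= z2 -> hfun mu z1 0 <= hfun mu z2 0.
Proof.
move=> z12; rewrite -lee_fin !hfun0E.
apply: ge0_le_integral => //; try exact: measurable_expR_mul.
move=> y /=; rewrite in_itv /= andbT => y0.
by rewrite lee_fin ler_expR ler_pM2l.
Qed.

Lemma hfun0_log_convex a b l : 0 < l -> l < 1 ->
  0 < hfun mu a 0 -> 0 < hfun mu b 0 ->
  hfun mu (l * a + (1 - l) * b) 0 <=
    expR (l * ln (hfun mu a 0) + (1 - l) * ln (hfun mu b 0)).
Proof.
move=> l0 l1 A0 B0; rewrite -lee_fin hfun0E.
set C := expR _; set k1 := C * l / hfun mu a 0; set k2 := C * (1 - l) / hfun mu b 0.
have k1_ge0 : 0 <= k1 by rewrite /k1 divr_ge0 ?mulr_ge0 ?expR_ge0 ?ltW.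
have k2_ge0 : 0 <= k2 by rewrite /k2 divr_ge0 ?mulr_ge0 ?expR_ge0 ?ltW ?subr_gt0.
apply: le_trans (_ : _ <= \int[mu]_(y in `]0%R, +oo[)
    (k1%:E * (expR (y * a))%:E + k2%:E * (expR (y * b))%:E))%E _.
  apply: ge0_le_integral => //; try exact: measurable_expR_mul.
    by apply: emeasurable_funD; apply: emeasurable_funM => //; exact: measurable_expR_mul.
  move=> y _; rewrite -!EFinM -EFinD lee_fin mulrDr !(mulrCA y).
  exact: expR_convex_normalized (ltW l0) (ltW l1) A0 B0.
rewrite ge0_integralD //; last 4 first.
- by move=> y _; rewrite -EFinM lee_fin mulr_ge0 ?expR_ge0.
- by apply: emeasurable_funM => //; exact: measurable_expR_mul.
- by move=> y _; rewrite -EFinM lee_fin mulr_ge0 ?expR_ge0.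
- by apply: emeasurable_funM => //; exact: measurable_expR_mul.
rewrite !ge0_integralZl //; try exact: measurable_expR_mul.
rewrite -!hfun0E -!EFinM -EFinD lee_fin /k1 /k2 !divfK ?gt_eqF //.
by rewrite -mulrDr addrC subrK mulr1.
Qed.

End laplace_transform.

Section marginal_utility.
Context {R : realType} (mu : {finite_measure set R -> \bar R}) (u : R -> R -> R).
Hypothesis mu_int : forall z : R,
  mu.-integrable `]0%R, +oo[ (fun y => (y * expR (y * z))%:E).
Hypothesis u_dx : forall x t : R, 0 < x -> 0 <= t -> derivable (fun x' => u x' t) x 1.
Hypothesis u_conc : forall t : R, 0 <= t -> strictly_concave_on_pos (fun x => u x t).
Hypothesis u_h : forall z t : R, 0 <= t -> ux u (hfun mu z t) t = expR (- z + t / 2).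

Lemma u0'_strictly_decr x1 x2 : 0 < x1 -> x1 < x2 -> u0' u x2 < u0' u x1.
Proof.
move=> x1_gt0 x12; have x2_gt0 := lt_trans x1_gt0 x12.
exact: (derive1_strictly_decr _ (u_conc 0 (lexx 0)) x1 x2 x1_gt0 x12
  (u_dx x1 0 x1_gt0 (lexx 0)) (u_dx x2 0 x2_gt0 (lexx 0))).
Qed.

Lemma u0'_inj x y : 0 < x -> 0 < y -> u0' u x = u0' u y -> x = y.
Proof.
move=> x0 y0 E; have [xy|yx|//] := ltgtP x y.
- by have := u0'_strictly_decr x y x0 xy; rewrite E ltxx.
- by have := u0'_strictly_decr y x y0 yx; rewrite E ltxx.
Qed.

Lemma u0'_hfun0 z : u0' u (hfun mu z 0) = expR (- z).
Proof. by rewrite /u0' u_h // mul0r addr0. Qed.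

(* If h(z,0) vanished, so would 0 <= h(z-1,0) <= h(z,0), and u0' would take
   both values e^-z and e^(1-z) at 0. *)
Lemma hfun0_gt0 z : 0 < hfun mu z 0.
Proof.
have h_ge0 := hfun0_ge0 mu (z - 1).
have h_le := hfun0_le mu mu_int (z - 1) z ltac:(lra).
rewrite lt_def hfun0_ge0 andbT; apply/eqP => h0.
have : u0' u (hfun mu (z - 1) 0) = u0' u (hfun mu z 0) by congr u0'; lra.
by rewrite !u0'_hfun0 => /expR_inj; lra.
Qed.

Lemma hfun0_strictly_incr z1 z2 : z1 < z2 -> hfun mu z1 0 < hfun mu z2 0.
Proof.
move=> z12; rewrite ltNge le_eqVlt; apply/negP => /orP[/eqP E|lt21].
  by have := u0'_hfun0 z1; rewrite -E u0'_hfun0 => /expR_inj; lra.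
have := u0'_strictly_decr _ _ (hfun0_gt0 z2) lt21.
by rewrite !u0'_hfun0 ltr_expR; lra.
Qed.

Hypothesis u0'_pos : forall x : R, 0 < x -> 0 < u0' u x.

Lemma hfun0_neg_ln_u0' s : hfun mu (- ln (u0' u (expR s))) 0 = expR s.
Proof.
apply: u0'_inj; [exact: hfun0_gt0|exact: expR_gt0|].
by rewrite u0'_hfun0 opprK lnK // posrE u0'_pos // expR_gt0.
Qed.

Lemma concave_neg_ln_u0' : concave_fun (fun s => - ln (u0' u (expR s))).
Proof.
apply: (@concave_fun_inverse _ (fun z => ln (hfun mu z 0))).
- by move=> z1 z2 /hfun0_strictly_incr; rewrite ltr_ln ?posrE ?hfun0_gt0.
- move=> a b l l0 l1; rewrite -ler_expR lnK ?posrE ?hfun0_gt0 //.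
  exact: hfun0_log_convex mu mu_int a b l l0 l1 (hfun0_gt0 a) (hfun0_gt0 b).
- by move=> s; rewrite hfun0_neg_ln_u0' expRK.
Qed.

End marginal_utility.

Theorem lemma5 (R : realType) (mu : {finite_measure set R -> \bar R})
  (u : R -> R -> R) (gamma : R)
  (* mu is a nonzero finite positive Borel measure on (0,oo) *)
  (mu_supp : mu [set y : R | y <= 0] = 0%E)
  (mu_nz : mu setT != 0%E)
  (mu_int : forall z : R,
      mu.-integrable `]0%R, +oo[ (fun y => (y * expR (y * z))%:E))
  (* regularity of u on (0,oo) x [0,oo) needed to state the PDE *)
  (u_dx : forall x t : R, 0 < x -> 0 <= t -> derivable (fun x' => u x' t) x 1)
  (u_dxx : forall x t : R, 0 < x -> 0 <= t -> derivable (fun x' => ux u x' t) x 1)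
  (u_dt : forall x t : R, 0 < x -> 0 < t -> derivable (fun t' => u x t') t 1)
  (* strictly increasing and strictly concave in x *)
  (u_incr : forall t : R, 0 <= t -> strictly_increasing_on_pos (fun x => u x t))
  (u_conc : forall t : R, 0 <= t -> strictly_concave_on_pos (fun x => u x t))
  (* the PDE u_t = 1/2 u_x^2 / u_xx *)
  (u_pde : forall x t : R, 0 < x -> 0 < t ->
      ut u x t = (ux u x t) ^+ 2 / (2 * uxx u x t))
  (* relation with h *)
  (u_h : forall z t : R, 0 <= t -> ux u (hfun mu z t) t = expR (- z + t / 2))
  (u0'_pos : forall x : R, 0 < x -> 0 < u0' u x)
  (gamma_lt1 : gamma < 1) (gamma_nz : gamma != 0) :
  ((forall g' : R, gamma < g' -> g' < 1 ->
       (u0' u x / x `^ (g' - 1)) @[x --> +oo] --> 0)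
   /\ (forall g'' : R, g'' < gamma ->
       (u0' u x / x `^ (g'' - 1)) @[x --> +oo] --> +oo))
  <->
  (forall k : R, 0 < k ->
       (u0' u (k * x) / u0' u x) @[x --> +oo] --> k `^ (gamma - 1)).
Proof.
(* The relation u_x(h(z,0),0) = e^-z pins down u0'. *)
have u0'E s : u0' u (expR s) = expR (- (- ln (u0' u (expR s)))).
  by rewrite opprK lnK // posrE u0'_pos // expR_gt0.
apply: (regular_variationP _ _ u0'E _ _ gamma_lt1).
exact: (concave_neg_ln_u0' mu u mu_int u_dx u_conc u_h u0'_pos).
Qed.
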